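(* Let $\mathbf{a}=(a_n)_{n\geq 1}$ be a strong divisibility sequence. Then for every non-negative integer $n$, \[\mathrm{lcm}\left\{\binom{n}{0}_{\mathbf{a}},\binom{n}{1}_{\mathbf{a}},\dots,\binom{n}{n}_{\mathbf{a}}\right\}=\frac{\mathrm{lcm}(a_1,a_2,\dots,a_n,a_{n+1})}{a_{n+1}}.\]
   Context: A strong divisibility sequence is a sequence of positive integers $(a_n)_{n\geq1}$ such that $\gcd(a_n,a_m)=a_{\gcd(n,m)}$ for all positive integers $n,m$. For integers $0\leq k\leq n$, the $\mathbf{a}$-binomial coefficient is $\binom{n}{k}_{\mathbf{a}}:=\frac{a_na_{n-1}\cdots a_{n-k+1}}{a_1a_2\cdots a_k}$ (empty products equal $1$); for a strong divisibility sequence these are positive integers. $\mathrm{lcm}$ denotes the least common positive multiple. *)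

From mathcomp Require Import all_boot.
Set Implicit Arguments. Unset Strict Implicit. Unset Printing Implicit Defensive.

(* A sequence (a_n)_{n>=1} of positive integers is modelled as a : nat -> nat;
   the value a 0 is irrelevant and never used. *)
Definition strong_div_seq (a : nat -> nat) : Prop :=
  (forall n, 0 < n -> 0 < a n) /\
  (forall n m, 0 < n -> 0 < m -> gcdn (a n) (a m) = a (gcdn n m)).

(* a-binomial coefficient  (a_n a_{n-1} ... a_{n-k+1}) / (a_1 ... a_k),
   for 0 <= k <= n (empty products equal 1). Division is nat division; for a
   strong divisibility sequence it is exact. *)
Definition abinom (a : nat -> nat) (n k : nat) : nat :=
  (\prod_(0 <= i < k) a (n - i)) %/ (\prod_(1 <= i < k.+1) a i).

From mathcomp Require Import all_boot zify.

(* Both sides are compared one prime p at a time through the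
   valuation v i := logn p (a i), which satisfies v (gcd i j) = min (v i) (v j).
   For such a function f and a threshold e, the indices i <= n+1 with e < f i
   are exactly the multiples of a single r (the least such index).  Writing a
   valuation as the sum over e of the indicators [e < f i] (layer-cake
   decomposition), the e-th layer of v_p of the a-binomial coefficient counts
   multiples of r among n-k+1..n minus those among 1..k, which is the carry
   [r <= (n-k) mod r + k mod r] in the division of n = (n-k) + k by r.
   Let m in 1..n+1 maximize v, so that v_p(lcm(a_1..a_{n+1})) = v m.  Every
   layer with a carry has r | m and r not dividing n+1, so the carry is at most
   [e < v m] - [e < v (n+1)]; for k = m-1 (where r | k+1 whenever r | m) the
   bound is attained.  Summing over e: every v_p(binom(n,k)_a) is at most
   v m - v (n+1) with equality at k = m-1, which is the p-part of the claim. *)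

Lemma count_dvd_window r n k : 0 < r -> k <= n ->
  \sum_(0 <= i < k) (r %| n - i) = n %/ r - (n - k) %/ r.
Proof.
move=> r_gt0; elim: k => [|k IHk] k_le; first by rewrite big_geq // subn0 subnn.
rewrite big_nat_recr //= IHk ?(ltnW k_le) //.
have n_k : n - k = (n - k.+1).+1 by lia.
have : (n - k) %/ r <= n %/ r by apply: leq_div2r; lia.
rewrite n_k divnS //; lia.
Qed.

Lemma sum_ltn_indicator B x : x <= B -> \sum_(0 <= e < B) (e < x) = x.
Proof.
move=> x_le; rewrite (@big_cat_nat _ _ _ x) //=.
rewrite (eq_big_nat _ _ (F2 := fun _ => 1)); last by move=> e /andP[_ ->].
rewrite [X in _ + X](eq_big_nat _ _ (F2 := fun _ => 0)); last first.
  by move=> e /andP[x_le_e _]; rewrite ltnNge x_le_e.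
by rewrite !sum_nat_const_nat; lia.
Qed.

Lemma sum_layers (I : eqType) (s : seq I) (F : I -> nat) B :
  {in s, forall i, F i <= B} ->
  \sum_(i <- s) F i = \sum_(0 <= e < B) \sum_(i <- s) (e < F i).
Proof.
move=> F_le; rewrite exchange_big /=.
by apply: eq_big_seq => i s_i; rewrite sum_ltn_indicator // F_le.
Qed.

Lemma logn_prod p (I : eqType) (s : seq I) (F : I -> nat) :
  {in s, forall i, 0 < F i} ->
  logn p (\prod_(i <- s) F i) = \sum_(i <- s) logn p (F i).
Proof.
elim: s => [|x s IHs] F_gt0; first by rewrite !big_nil logn1.
have F_gt0_s : {in s, forall i, 0 < F i}.
  by move=> i s_i; apply: F_gt0; rewrite inE s_i orbT.
rewrite !big_cons lognM ?F_gt0 ?mem_head ?IHs // big_seq.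
exact: prodn_cond_gt0.
Qed.

Lemma biglcm_gt0 (I : eqType) (s : seq I) (F : I -> nat) :
  {in s, forall i, 0 < F i} -> 0 < \big[lcmn/1]_(i <- s) F i.
Proof.
move=> F_gt0; rewrite big_seq; elim/big_ind: _ => // u v.
by rewrite lcmn_gt0 => -> ->.
Qed.

Lemma logn_biglcm p (I : eqType) (s : seq I) (F : I -> nat) :
  {in s, forall i, 0 < F i} ->
  logn p (\big[lcmn/1]_(i <- s) F i) = \max_(i <- s) logn p (F i).
Proof.
elim: s => [|x s IHs] F_gt0; first by rewrite !big_nil logn1.
have F_gt0_s : {in s, forall i, 0 < F i}.
  by move=> i s_i; apply: F_gt0; rewrite inE s_i orbT.
by rewrite !big_cons logn_lcm ?F_gt0 ?mem_head ?IHs ?biglcm_gt0.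
Qed.

Lemma dvdn_from_logn d m : 0 < d -> 0 < m ->
  (forall p, logn p d <= logn p m) -> d %| m.
Proof.
move=> d_gt0 m_gt0 le_logn; apply/lcmn_idPr.
apply: eqn_from_log => [||p]; rewrite ?lcmn_gt0 ?d_gt0 //.
by rewrite logn_lcm //; apply/maxn_idPr.
Qed.

Lemma exists_argmax (F : nat -> nat) N : exists m,
  [/\ 0 < m, m <= N.+1 & forall i, 0 < i -> i <= N.+1 -> F i <= F m].
Proof.
elim: N => [|N [m [m_gt0 m_le F_max]]].
  by exists 1; split=> // i i_gt0 i_le; have -> : i = 1 by lia.
have [F_le | F_gt] := leqP (F N.+2) (F m).
  exists m; split=> [||i i_gt0 i_le] //; first by lia.
  by case: (ltnP i N.+2) => [i_lt | i_ge]; [apply: F_max | have -> : i = N.+2 by lia].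
exists N.+2; split=> // i i_gt0 i_le.
case: (ltnP i N.+2) => [i_lt | i_ge]; last by have -> : i = N.+2 by lia.
exact: leq_trans (F_max i i_gt0 i_lt) (ltnW F_gt).
Qed.

(* The carry produced at the units digit when adding x and k in base r. *)
Definition carry (r x k : nat) : bool := r <= x %% r + k %% r.

Lemma carry_not_dvd r x k : 0 < r -> carry r x k -> ~~ (r %| (x + k).+1).
Proof.
rewrite /carry => r_gt0 carry_xk.
have split_sum : (x + k).+1 = (x %/ r + k %/ r).+1 * r + ((x %% r + k %% r).+1 - r).
  by rewrite {1}(divn_eq x r) {1}(divn_eq k r); lia.
have := ltn_pmod x r_gt0; have := ltn_pmod k r_gt0.
rewrite /dvdn split_sum modnMDl; move: carry_xk.
move: (x %% r) (k %% r) => u v *; rewrite modn_small; lia.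
Qed.

Lemma carry_dvd_succ r x k : 0 < r -> r %| k.+1 ->
  carry r x k = ~~ (r %| (x + k).+1).
Proof.
move=> r_gt0 /dvdnP [c k_succ].
have k_mod : k %% r = r.-1.
  have -> : k = c.-1 * r + r.-1 by case: c k_succ => [|c]; nia.
  by rewrite modnMDl modn_small // prednK.
rewrite /carry -addnS k_succ (dvdn_addl _ (dvdn_mull c (dvdnn r))) /dvdn k_mod.
have := ltn_pmod x r_gt0; case: (x %% r) => [|y]; rewrite ?mod0n; lia.
Qed.

(* For f with f (gcd i j) = min (f i) (f j), each superlevel set
   {i in 1..N | e < f i} is the set of multiples of some r in 1..N
   (r = N+1 when the set is empty). *)
Lemma gcd_min_threshold {f : nat -> nat} :
  (forall i j, 0 < i -> 0 < j -> f (gcdn i j) = minn (f i) (f j)) ->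
  forall e N, exists2 r, 0 < r & forall i, 0 < i -> i <= N -> (e < f i) = (r %| i).
Proof.
move=> f_gcd e N.
case: (boolP [exists i : 'I_N.+1, (0 < i) && (e < f i)]) => [/existsP ex | none].
- have ex_nat : exists i, (0 < i) && (e < f i) by case: ex => i ?; exists i.
  case: (ex_minnP ex_nat) => r /andP[r_gt0 f_r] r_min.
  exists r => // i i_gt0 _; apply/idP/idP => [f_i | r_dvd_i].
  + have g_gt0 : 0 < gcdn i r by rewrite gcdn_gt0 i_gt0.
    have f_g : e < f (gcdn i r) by rewrite f_gcd // leq_min f_i f_r.
    have g_eq : gcdn i r = r.
      by apply/eqP; rewrite eqn_leq r_min ?g_gt0 // dvdn_leq // dvdn_gcdr.
    by rewrite -g_eq dvdn_gcdl.
  + move: (f_gcd r i r_gt0 i_gt0); rewrite (gcdn_idPl r_dvd_i) => f_r_min.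
    by move: f_r; rewrite f_r_min leq_min => /andP[].
- exists N.+1 => // i i_gt0 i_le.
  have -> : (N.+1 %| i) = false by apply/negbTE/negP => /(dvdn_leq i_gt0); lia.
  apply/negbTE; apply: contra none => f_i; apply/existsP.
  by exists (Ordinal (i_le : i < N.+1)); rewrite /= i_gt0.
Qed.

Section Layers.
Variables (f : nat -> nat) (n : nat).
Hypothesis f_gcd : forall i j, 0 < i -> 0 < j -> f (gcdn i j) = minn (f i) (f j).

(* The e-th layers of f summed over the numerator indices n, ..., n-k+1 and
   over the denominator indices 1, ..., k of the a-binomial coefficient. *)
Definition num_layer e k := \sum_(0 <= i < k) (e < f (n - i)).
Definition den_layer e k := \sum_(1 <= i < k.+1) (e < f i).

Section FixedLayer.
Context {e r : nat}.
Hypothesis r_gt0 : 0 < r.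
Hypothesis layer_dvd : forall i, 0 < i -> i <= n.+1 -> (e < f i) = (r %| i).

Lemma den_layerE k : k <= n -> den_layer e k = k %/ r.
Proof.
move=> k_le; rewrite divn_count_dvd; apply: eq_big_nat => i /andP[i_gt0 i_le].
by rewrite layer_dvd //; lia.
Qed.

Lemma num_layerE k : k <= n -> num_layer e k = k %/ r + carry r (n - k) k.
Proof.
move=> k_le.
have -> : num_layer e k = n %/ r - (n - k) %/ r.
  rewrite -count_dvd_window //; apply: eq_big_nat => i /andP[_ i_lt].
  by rewrite layer_dvd //; lia.
by rewrite -{1}(subnK k_le) divnD // -addnA addKn.
Qed.
End FixedLayer.

Lemma den_layer_le e k : k <= n -> den_layer e k <= num_layer e k.
Proof.
move=> k_le; have [r r_gt0 layer_dvd] := gcd_min_threshold f_gcd e n.+1.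
by rewrite (num_layerE r_gt0 layer_dvd) // (den_layerE r_gt0 layer_dvd) // leq_addr.
Qed.

Section Maximizer.
Variable m : nat.
Hypotheses (m_gt0 : 0 < m) (m_le : m <= n.+1).
Hypothesis f_max : forall i, 0 < i -> i <= n.+1 -> f i <= f m.

Section MaximizerLayer.
Context {e r : nat}.
Hypothesis r_gt0 : 0 < r.
Hypothesis layer_dvd : forall i, 0 < i -> i <= n.+1 -> (e < f i) = (r %| i).

(* A layer of index r <= n+1 is nonempty, hence contains the maximizer m. *)
Lemma layer_dvd_max : r <= n.+1 -> r %| m.
Proof.
move=> r_le; rewrite -layer_dvd //.
by apply: leq_trans _ (f_max r r_gt0 r_le); rewrite layer_dvd.
Qed.

(* A carry forces r <= n+1, hence r | m, while r cannot divide n+1. *)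
Lemma carry_le_layer k : k <= n ->
  carry r (n - k) k <= (r %| m) - (r %| n.+1).
Proof.
move=> k_le; have [carry_k | //] := boolP (carry r (n - k) k).
have r_le : r <= n.+1.
  apply: leq_trans (carry_k : r <= _) _.
  by apply: leq_trans (leq_add (leq_mod _ _) (leq_mod _ _)) _; lia.
have := carry_not_dvd _ _ _ r_gt0 carry_k; rewrite subnK // layer_dvd_max //.
by move/negbTE ->.
Qed.

Lemma carry_at_max : carry r (n - m.-1) m.-1 = ((r %| m) - (r %| n.+1)) :> nat.
Proof.
have k_le : m.-1 <= n by lia.
have [r_dvd_m | r_ndvd_m] := boolP (r %| m).
  rewrite carry_dvd_succ ?prednK // subnK //.
  by case: (r %| n.+1).
have r_gt : n.+1 < r by rewrite ltnNge; apply: contra r_ndvd_m; exact: layer_dvd_max.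
have -> : (r %| n.+1) = false.
  by apply/negbTE/negP => /(dvdn_leq (ltn0Sn n)); rewrite leqNgt r_gt.
rewrite /carry !modn_small; lia.
Qed.
End MaximizerLayer.

Lemma layer_gap_le e k : k <= n ->
  num_layer e k - den_layer e k <= (e < f m) - (e < f n.+1).
Proof.
move=> k_le; have [r r_gt0 layer_dvd] := gcd_min_threshold f_gcd e n.+1.
rewrite (num_layerE r_gt0 layer_dvd) // (den_layerE r_gt0 layer_dvd) // addKn.
by rewrite !layer_dvd // (carry_le_layer r_gt0 layer_dvd).
Qed.

Lemma layer_gap_at_max e :
  num_layer e m.-1 - den_layer e m.-1 = (e < f m) - (e < f n.+1).
Proof.
have k_le : m.-1 <= n by lia.
have [r r_gt0 layer_dvd] := gcd_min_threshold f_gcd e n.+1.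
rewrite (num_layerE r_gt0 layer_dvd) // (den_layerE r_gt0 layer_dvd) // addKn.
by rewrite !layer_dvd // (carry_at_max r_gt0 layer_dvd).
Qed.
End Maximizer.
End Layers.

Section StrongDivisibility.
Variable a : nat -> nat.
Hypothesis a_gt0 : forall i, 0 < i -> 0 < a i.
Hypothesis a_gcd : forall i j, 0 < i -> 0 < j -> gcdn (a i) (a j) = a (gcdn i j).
Variable n : nat.

Definition abinom_num k := \prod_(0 <= i < k) a (n - i).
Definition abinom_den k := \prod_(1 <= i < k.+1) a i.

Lemma abinom_num_gt0 k : k <= n -> 0 < abinom_num k.
Proof.
move=> k_le; rewrite /abinom_num big_seq; apply: prodn_cond_gt0 => i.
by rewrite mem_index_iota => /andP[_ i_lt]; apply: a_gt0; lia.
Qed.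

Lemma abinom_den_gt0 k : 0 < abinom_den k.
Proof.
rewrite /abinom_den big_seq; apply: prodn_cond_gt0 => i.
by rewrite mem_index_iota => /andP[i_gt0 _]; apply: a_gt0.
Qed.

Lemma logn_a_gcd p i j : 0 < i -> 0 < j ->
  logn p (a (gcdn i j)) = minn (logn p (a i)) (logn p (a j)).
Proof. by move=> i_gt0 j_gt0; rewrite -a_gcd // logn_gcd ?a_gt0. Qed.

Section Valuation.
(* A base p and an index m maximizing logn p (a i) over 1..n+1; the layers
   above logn p (a m) are empty on the relevant indices. *)
Context {p m : nat}.
Hypothesis v_max : forall i, 0 < i -> i <= n.+1 -> logn p (a i) <= logn p (a m).
Let v i := logn p (a i).

Lemma logn_abinom_num k : k <= n ->
  logn p (abinom_num k) = \sum_(0 <= e < v m) num_layer v n e k.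
Proof.
move=> k_le; rewrite /abinom_num logn_prod => [|i]; last first.
  by rewrite mem_index_iota => /andP[_ i_lt]; apply: a_gt0; lia.
rewrite (@sum_layers _ _ _ (v m)) // => i; rewrite mem_index_iota => /andP[_ i_lt].
by apply: v_max; lia.
Qed.

Lemma logn_abinom_den k : k <= n ->
  logn p (abinom_den k) = \sum_(0 <= e < v m) den_layer v e k.
Proof.
move=> k_le; rewrite /abinom_den logn_prod => [|i]; last first.
  by rewrite mem_index_iota => /andP[i_gt0 _]; apply: a_gt0.
rewrite (@sum_layers _ _ _ (v m)) // => i; rewrite mem_index_iota => /andP[i_gt0 i_lt].
by apply: v_max; lia.
Qed.
End Valuation.

(* binom(n, k)_a is an integer: compare valuations layer by layer. *)
Lemma abinom_den_dvd k : k <= n -> abinom_den k %| abinom_num k.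
Proof.
move=> k_le; apply: dvdn_from_logn (abinom_den_gt0 k) (abinom_num_gt0 _ k_le) _ => p.
have [m [_ _ v_max]] := exists_argmax (fun i => logn p (a i)) n.
rewrite (logn_abinom_num v_max) // (logn_abinom_den v_max) //.
by apply: leq_sum => e _; apply: den_layer_le => //; exact: logn_a_gcd.
Qed.

Lemma abinom_gt0 k : k <= n -> 0 < abinom a n k.
Proof.
move=> k_le; rewrite divn_gt0 ?abinom_den_gt0 //.
exact: dvdn_leq (abinom_num_gt0 _ k_le) (abinom_den_dvd _ k_le).
Qed.

Lemma lcm_prefix_gt0 : 0 < \big[lcmn/1]_(1 <= i < n.+2) a i.
Proof.
by apply: biglcm_gt0 => i; rewrite mem_index_iota => /andP[i_gt0 _]; apply: a_gt0.
Qed.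

Section AbinomValuation.
Context {p m : nat}.
Hypotheses (m_gt0 : 0 < m) (m_le : m <= n.+1).
Hypothesis v_max : forall i, 0 < i -> i <= n.+1 -> logn p (a i) <= logn p (a m).
Let v i := logn p (a i).

Lemma logn_lcm_prefix : logn p (\big[lcmn/1]_(1 <= i < n.+2) a i) = v m.
Proof.
rewrite logn_biglcm => [|i]; last first.
  by rewrite mem_index_iota => /andP[i_gt0 _]; apply: a_gt0.
apply/eqP; rewrite eqn_leq; apply/andP; split.
  by apply/bigmax_leqP_seq => i; rewrite mem_index_iota => /andP[i_gt0 i_lt] _; apply: v_max.
by apply: (leq_bigmax_seq m) => //; rewrite mem_index_iota m_gt0.
Qed.

Lemma logn_abinom k : k <= n -> logn p (abinom a n k) =
  \sum_(0 <= e < v m) (num_layer v n e k - den_layer v e k).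
Proof.
move=> k_le; rewrite logn_div ?abinom_den_dvd //.
rewrite (logn_abinom_num v_max) // (logn_abinom_den v_max) // sumnB // => e _.
by apply: den_layer_le => //; exact: logn_a_gcd.
Qed.

Lemma logn_gap_layers :
  v m - v n.+1 = \sum_(0 <= e < v m) ((e < v m) - (e < v n.+1)).
Proof.
have v_le : v n.+1 <= v m by apply: v_max.
rewrite sumnB ?sum_ltn_indicator // => e _.
by case: (ltnP e (v n.+1)) => [/leq_trans/(_ v_le) -> |].
Qed.

Lemma logn_abinom_le k : k <= n -> logn p (abinom a n k) <= v m - v n.+1.
Proof.
move=> k_le; rewrite logn_abinom // logn_gap_layers; apply: leq_sum => e _.
exact: (@layer_gap_le v n (logn_a_gcd p) m m_gt0 m_le v_max).
Qed.

Lemma logn_abinom_at_max : logn p (abinom a n m.-1) = v m - v n.+1.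
Proof.
rewrite logn_abinom ?logn_gap_layers; last by lia.
by apply: eq_bigr => e _; exact: (@layer_gap_at_max v n (logn_a_gcd p) m m_gt0 m_le v_max).
Qed.
End AbinomValuation.
End StrongDivisibility.

Theorem theorem1 (a : nat -> nat) (Ha : strong_div_seq a) (n : nat) :
  \big[lcmn/1]_(0 <= k < n.+1) abinom a n k
  = (\big[lcmn/1]_(1 <= i < n.+2) a i) %/ a n.+1.
Proof.
case: Ha => a_gt0 a_gcd.
have abinom_pos : {in index_iota 0 n.+1, forall k, 0 < abinom a n k}.
  by move=> k; rewrite mem_index_iota => /andP[_ k_lt]; apply: abinom_gt0.
have a_dvd_lcm : a n.+1 %| \big[lcmn/1]_(1 <= i < n.+2) a i.
  by rewrite big_nat_recr //= dvdn_lcmr.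
apply: eqn_from_log => [||p]; first exact: biglcm_gt0.
  by rewrite divn_gt0 ?a_gt0 // dvdn_leq ?lcm_prefix_gt0.
have [m [m_gt0 m_le v_max]] := exists_argmax (fun i => logn p (a i)) n.
rewrite logn_div // (logn_lcm_prefix _ a_gt0 _ m_gt0 m_le v_max) logn_biglcm //=.
apply/eqP; rewrite eqn_leq; apply/andP; split.
  apply/bigmax_leqP_seq => k; rewrite mem_index_iota => /andP[_ k_lt] _.
  exact: logn_abinom_le.
rewrite -(logn_abinom_at_max _ a_gt0 a_gcd _ m_gt0 m_le v_max).
by apply: leq_bigmax_seq; rewrite // mem_index_iota; lia.
Qed.
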